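(* Let $\kappa$ be a regular uncountable cardinal, $\vec C$ a $C$-sequence over $\kappa$ and $\rho_0$ the corresponding walks function. For all $\alpha<\beta<\kappa$ such that $\rho_{0\alpha}$ and $\rho_{0\beta}$ are incomparable (neither is a subset of the other), $\Delta(\rho_{0\alpha},\rho_{0\beta})\notin V(\vec C)$.
   Context: A $C$-sequence over $\kappa$ is $\langle C_\delta\mid\delta<\kappa\rangle$, each $C_\delta$ a closed subset of $\delta$ with $\sup(C_\delta)=\sup(\delta)$. Walks: $\mathrm{Tr}(\beta,\gamma)(0)=\gamma$, $\mathrm{Tr}(\beta,\gamma)(n)=\min(C_{\mathrm{Tr}(\beta,\gamma)(n-1)}\setminus\beta)$ if $\mathrm{Tr}(\beta,\gamma)(n-1)>\beta$, else $\beta$; $\rho_2(\beta,\gamma)$ least $l$ with $\mathrm{Tr}(\beta,\gamma)(l)=\beta$; $\rho_0(\beta,\gamma)=\langle\mathrm{otp}(C_{\mathrm{Tr}(\beta,\gamma)(n)}\cap\beta)\mid n<\rho_2(\beta,\gamma)\rangle$. The fiber $\rho_{0\delta}:\delta\to{}^{<\omega}\kappa$ is $\rho_{0\delta}(\xi)=\rho_0(\xi,\delta)$. For functions $f,g$ with ordinal domains, $\Delta(f,g)=\min\{\mathrm{dom}(f),\mathrm{dom}(g),\delta\mid\delta\in\mathrm{dom}(f)\cap\mathrm{dom}(g),\ f(\delta)\ne g(\delta)\}$. $\mathrm{acc}(\kappa)$ is the set of nonzero limit ordinals below $\kappa$, and $V(\vec C)=\{\delta\in\mathrm{acc}(\kappa)\mid\forall\alpha\in(\delta,\kappa)\,\forall\epsilon<\delta\,[C_\delta\cap[\epsilon,\delta)\ne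 C_\alpha\cap[\epsilon,\delta)]\}$. *)

(* kappa is modelled abstractly as a type K with a strict
   well-order lt whose order type is a regular uncountable cardinal. *)
From Stdlib Require Import List Arith ClassicalEpsilon.
Import ListNotations.
Set Implicit Arguments.

Section Walks.
Variable K : Type.
Variable lt : K -> K -> Prop.

Definition le (x y : K) : Prop := lt x y \/ x = y.

Definition strict_well_order : Prop :=
  (forall x, ~ lt x x) /\
  (forall x y z, lt x y -> lt y z -> lt x z) /\
  (forall x y, lt x y \/ x = y \/ lt y x) /\
  well_founded lt.

Definition segment (delta : K) : Type := { xi : K | lt xi delta }.

Definition injective_fun (A B : Type) (f : A -> B) : Prop :=
  forall x y, f x = f y -> x = y.

(* K is an initial ordinal: it does not inject into any proper initial segment *)
Definition is_cardinal : Prop :=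
  forall delta : K, ~ exists f : K -> segment delta, injective_fun f.

Definition is_regular : Prop :=
  forall (delta : K) (f : segment delta -> K), exists gamma, forall x, lt (f x) gamma.

Definition is_uncountable : Prop := ~ exists f : K -> nat, injective_fun f.

Definition regular_uncountable_cardinal : Prop :=
  strict_well_order /\ is_cardinal /\ is_regular /\ is_uncountable.

Definition closed_subset (X : K -> Prop) (delta : K) : Prop :=
  (forall x, X x -> lt x delta) /\
  (forall gamma, lt gamma delta ->
     (exists x, X x /\ lt x gamma) ->
     (forall xi, lt xi gamma -> exists x, X x /\ lt xi x /\ lt x gamma) ->
     X gamma).

Definition same_sup (X : K -> Prop) (delta : K) : Prop :=
  forall gamma, (forall x, X x -> le x gamma) <-> (forall xi, lt xi delta -> le xi gamma).

Definition C_sequence (C : K -> K -> Prop) : Prop :=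
  forall delta, closed_subset (C delta) delta /\ same_sup (C delta) delta.

(* least element of P, or the default d if P is empty *)
Definition min_or (d : K) (P : K -> Prop) : K :=
  epsilon (inhabits d)
    (fun m => (P m /\ forall x, P x -> ~ lt x m) \/ ((~ exists x, P x) /\ m = d)).

(* order type of X (a set of ordinals), d is an irrelevant default *)
Definition otp (d : K) (X : K -> Prop) : K :=
  epsilon (inhabits d)
    (fun delta => exists f : K -> K,
        (forall xi, lt xi delta -> X (f xi)) /\
        (forall xi eta, lt xi delta -> lt eta delta -> lt xi eta -> lt (f xi) (f eta)) /\
        (forall x, X x -> exists xi, lt xi delta /\ f xi = x)).

Variable C : K -> K -> Prop.

Fixpoint Tr (beta gamma : K) (n : nat) : K :=
  match n with
  | O => gamma
  | S m => let t := Tr beta gamma m in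
           if excluded_middle_informative (lt beta t)
           then min_or beta (fun x => C t x /\ le beta x)
           else beta
  end.

Definition rho2 (beta gamma : K) : nat :=
  epsilon (inhabits 0)
    (fun l => Tr beta gamma l = beta /\ forall m, m < l -> Tr beta gamma m <> beta).

Definition rho0 (beta gamma : K) : list K :=
  map (fun n => otp beta (fun x => C (Tr beta gamma n) x /\ lt x beta))
      (seq 0 (rho2 beta gamma)).

(* the fiber rho_{0 delta} : delta -> K^{<omega}; its domain is delta *)
Definition rho0_fiber (delta : K) : K -> list K := fun xi => rho0 xi delta.

(* a function with ordinal domain: (domain, values) *)
Definition fun_subset (a : K) (f : K -> list K) (b : K) (g : K -> list K) : Prop :=
  forall xi, lt xi a -> lt xi b /\ f xi = g xi.

Definition Delta (a : K) (f : K -> list K) (b : K) (g : K -> list K) : K :=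
  min_or a (fun x => x = a \/ x = b \/ (lt x a /\ lt x b /\ f x <> g x)).

Definition nonzero_limit (delta : K) : Prop :=
  (exists xi, lt xi delta) /\
  (forall xi, lt xi delta -> exists eta, lt xi eta /\ lt eta delta).

Definition in_V (delta : K) : Prop :=
  nonzero_limit delta /\
  forall alpha, lt delta alpha ->
  forall eps, lt eps delta ->
    ~ (forall xi, le eps xi -> lt xi delta -> (C delta xi <-> C alpha xi)).

End Walks.

(* Let delta = Delta(rho0_alpha, rho0_beta) and suppose delta is in V; so delta is a limit,
   rho0(xi, alpha) = rho0(xi, beta) for xi < delta, and rho0(delta, alpha) <> rho0(delta, beta).
   For gamma > delta, every step of the walk from gamma to delta but the last one, from a,
   uses a set C_t bounded below delta, so for xi close to delta the walk from gamma to xi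
   follows the walk to delta up to a. Either C_a is bounded below delta, and the walk to xi
   passes through delta: rho0(xi, gamma) = rho0(delta, gamma) ++ rho0(xi, delta); or C_a is
   cofinal in delta, and then xi is in C_a exactly when rho0(xi, gamma) has the least
   possible length, in which case its last entry is otp(C_a ∩ xi). As rho0(xi, delta) has
   its least length 1 exactly for xi in C_delta, comparing gamma = alpha with gamma = beta
   near delta gives: two walks through delta cancel to rho0(delta, alpha) = rho0(delta, beta);
   a walk through delta and one ending at a make C_a and C_delta agree on a tail of delta,
   which delta in V forbids; two walks ending at a and a' make C_a and C_a' agree on a tail,
   so they have the same order type below delta and again rho0(delta, alpha) = rho0(delta, beta). *)

From Stdlib Require Import List Arith Lia ClassicalEpsilon Classical FunctionalExtensionality.
Import ListNotations.
Set Implicit Arguments.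
Unset Strict Implicit.

Section Walks.
Variables (K : Type) (lt : K -> K -> Prop).
Hypothesis W : strict_well_order lt.

Lemma swo_irrefl x : ~ lt x x.
Proof. exact (proj1 W x). Qed.

Lemma swo_trans x y z : lt x y -> lt y z -> lt x z.
Proof. exact (proj1 (proj2 W) x y z). Qed.

Lemma swo_trichotomy x y : lt x y \/ x = y \/ lt y x.
Proof. exact (proj1 (proj2 (proj2 W)) x y). Qed.

Lemma swo_wf : well_founded lt.
Proof. exact (proj2 (proj2 (proj2 W))). Qed.

Lemma swo_asym x y : lt x y -> ~ lt y x.
Proof. intros Hxy Hyx. exact (swo_irrefl (swo_trans Hxy Hyx)). Qed.

Lemma swo_lt_le_trans x y z : lt x y -> le lt y z -> lt x z.
Proof. intros Hxy [Hyz | <-]; [exact (swo_trans Hxy Hyz) | exact Hxy]. Qed.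

Lemma swo_not_lt x y : ~ lt x y -> le lt y x.
Proof.
  intros Hn. destruct (swo_trichotomy x y) as [H | [-> | H]]; [contradiction | right | left]; auto.
Qed.

Lemma swo_le_not_lt x y : le lt x y -> ~ lt y x.
Proof. intros [Hxy | <-]; [exact (swo_asym Hxy) | apply swo_irrefl]. Qed.

Lemma swo_least (P : K -> Prop) :
  (exists x, P x) -> exists m, P m /\ forall x, P x -> ~ lt x m.
Proof.
  intros [x Hx]. apply NNPP. intros Hnone. revert Hx.
  induction x as [x IH] using (well_founded_ind swo_wf). intros Hx.
  apply Hnone. exists x. split; [exact Hx |]. intros y Hy Hyx. exact (IH y Hyx Hy).
Qed.

Lemma min_or_least d (P : K -> Prop) :
  (exists x, P x) -> P (min_or lt d P) /\ forall x, P x -> ~ lt x (min_or lt d P).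
Proof.
  intros Hex. unfold min_or.
  match goal with |- context [epsilon ?i ?Q] => destruct (epsilon_spec i Q) as [H | [Hn _]] end.
  - destruct (swo_least Hex) as [m Hm]. exists m. left. exact Hm.
  - exact H.
  - contradiction.
Qed.

Lemma min_or_empty d (P : K -> Prop) : ~ (exists x, P x) -> min_or lt d P = d.
Proof.
  intros Hn. unfold min_or.
  match goal with |- context [epsilon ?i ?Q] => destruct (epsilon_spec i Q) as [[H _] | [_ H]] end.
  - exists d. right. auto.
  - exfalso. eauto.
  - exact H.
Qed.

Lemma min_or_eq d (P : K -> Prop) m :
  P m -> (forall x, P x -> ~ lt x m) -> min_or lt d P = m.
Proof.
  intros Hm Hleast. destruct (min_or_least d (ex_intro P m Hm)) as [Hmin Hmin_least].
  destruct (swo_trichotomy (min_or lt d P) m) as [H | [H | H]]; auto.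
  - exfalso. exact (Hleast _ Hmin H).
  - exfalso. exact (Hmin_least _ Hm H).
Qed.

Lemma Delta_spec (a b : K) (f g : K -> list K) :
  lt a b -> ~ fun_subset lt a f b g ->
  lt (Delta lt a f b g) a /\ f (Delta lt a f b g) <> g (Delta lt a f b g) /\
  forall xi, lt xi (Delta lt a f b g) -> f xi = g xi.
Proof.
  intros Hab Hsub.
  assert (Hex : exists xi, lt xi a /\ f xi <> g xi).
  { apply NNPP. intros Hn. apply Hsub. intros xi Hxi. split; [exact (swo_trans Hxi Hab) |].
    apply NNPP. intros Hne. apply Hn. eauto. }
  destruct Hex as [xi0 [Hxi0 Hne0]].
  assert (HP0 : xi0 = a \/ xi0 = b \/ (lt xi0 a /\ lt xi0 b /\ f xi0 <> g xi0))
    by (right; right; split; [| split]; eauto using swo_trans).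
  destruct (min_or_least a
    (ex_intro (fun x => x = a \/ x = b \/ (lt x a /\ lt x b /\ f x <> g x)) xi0 HP0))
    as [Hd Hleast].
  unfold Delta. revert Hd Hleast.
  generalize (min_or lt a (fun x => x = a \/ x = b \/ (lt x a /\ lt x b /\ f x <> g x))).
  intros d Hd Hleast.
  assert (Hda : lt d a).
  { destruct Hd as [-> | [-> | [H _]]]; [| exfalso | exact H].
    - exfalso. exact (Hleast xi0 HP0 Hxi0).
    - exact (Hleast xi0 HP0 (swo_trans Hxi0 Hab)). }
  split; [exact Hda | split].
  - destruct Hd as [-> | [-> | [_ [_ H]]]]; [| | exact H]; exfalso.
    + exact (swo_irrefl Hda).
    + exact (swo_asym Hda Hab).
  - intros xi Hxi. apply NNPP. intros Hne. apply (Hleast xi); [| exact Hxi].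
    right; right. split; [| split]; eauto using swo_trans.
Qed.

(** * Order types *)

Hypothesis K_cardinal : is_cardinal lt.

Definition enumerates (X : K -> Prop) (g : K) (f : K -> K) : Prop :=
  (forall xi, lt xi g -> X (f xi)) /\
  (forall xi eta, lt xi g -> lt eta g -> lt xi eta -> lt (f xi) (f eta)) /\
  (forall x, X x -> exists xi, lt xi g /\ f xi = x).

Lemma enumerates_ext X Y g f :
  (forall x, X x <-> Y x) -> enumerates X g f -> enumerates Y g f.
Proof.
  intros HXY [Hmaps [Hincr Honto]]. split; [| split]; auto.
  - intros xi Hxi. apply HXY. auto.
  - intros x Hx. apply Honto, HXY, Hx.
Qed.

Lemma enumerates_lt_iff X g f eta0 z :
  enumerates X g f -> lt eta0 g -> lt z g -> (lt z eta0 <-> lt (f z) (f eta0)).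
Proof.
  intros [_ [Hincr _]] Heta0 Hz. split; [auto |].
  intros Hf. apply NNPP. intros Hn. destruct (swo_not_lt Hn) as [H | <-].
  - exact (swo_asym Hf (Hincr _ _ Heta0 Hz H)).
  - exact (swo_irrefl Hf).
Qed.

Lemma enumerates_least X g f eta a :
  enumerates X g f -> lt eta g -> X a -> (forall z, lt z eta -> lt (f z) a) -> ~ lt a (f eta).
Proof.
  intros [_ [Hincr Honto]] Heta Ha Hbelow Hlt.
  destruct (Honto a Ha) as [th [Hth <-]].
  destruct (swo_trichotomy th eta) as [H | [-> | H]].
  - exact (swo_irrefl (Hbelow th H)).
  - exact (swo_irrefl Hlt).
  - exact (swo_asym (Hincr _ _ Heta Hth H) Hlt).
Qed.

Lemma enumerates_agree X Y g g' f f' :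
  enumerates X g f -> enumerates Y g' f' ->
  (forall x, X x -> Y x) -> (forall y x, Y y -> X x -> lt y x -> X y) ->
  forall eta, lt eta g -> lt eta g' -> f eta = f' eta.
Proof.
  intros Hf Hf' Hsub Hinit eta.
  induction eta as [eta IH] using (well_founded_ind swo_wf). intros Hg Hg'.
  destruct Hf as [Hmaps [Hincr Honto]], Hf' as [Hmaps' [Hincr' Honto']].
  assert (Hbelow : forall z, lt z eta -> f z = f' z)
    by (intros z Hz; apply IH; eauto using swo_trans).
  assert (Hge : ~ lt (f eta) (f' eta)).
  { apply (enumerates_least (conj Hmaps' (conj Hincr' Honto'))); auto.
    intros z Hz. rewrite <- Hbelow by exact Hz. apply Hincr; eauto using swo_trans. }
  assert (HX : X (f' eta)).
  { destruct (swo_not_lt Hge) as [H | ->]; [apply (Hinit _ (f eta)) |]; auto. }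
  assert (Hle : ~ lt (f' eta) (f eta)).
  { apply (enumerates_least (conj Hmaps (conj Hincr Honto))); auto.
    intros z Hz. rewrite Hbelow by exact Hz. apply Hincr'; eauto using swo_trans. }
  destruct (swo_trichotomy (f eta) (f' eta)) as [H | [H | H]]; tauto.
Qed.

Lemma enumerates_length_unique X g g' f f' :
  enumerates X g f -> enumerates X g' f' -> g = g'.
Proof.
  intros Hf Hf'.
  assert (Hagree := enumerates_agree Hf Hf' (fun x H => H) (fun y x Hy _ _ => Hy)).
  destruct Hf as [Hmaps [Hincr Honto]], Hf' as [Hmaps' [Hincr' Honto']].
  destruct (swo_trichotomy g g') as [H | [H | H]]; [exfalso | exact H | exfalso].
  - destruct (Honto _ (Hmaps' g H)) as [th [Hth Hf]].
    rewrite (Hagree th Hth (swo_trans Hth H)) in Hf.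
    apply (swo_irrefl (x := f' g)). rewrite <- Hf at 1.
    apply Hincr'; eauto using swo_trans.
  - destruct (Honto' _ (Hmaps g' H)) as [th [Hth Hf]].
    rewrite <- (Hagree th (swo_trans Hth H) Hth) in Hf.
    apply (swo_irrefl (x := f g')). rewrite <- Hf at 1.
    apply Hincr; eauto using swo_trans.
Qed.

Section Enumeration.
Variables (X : K -> Prop) (delta : K).
Hypothesis X_bounded : forall x, X x -> lt x delta.

(* Once [X] is exhausted, [enumeration] takes the junk value [delta]. *)
Definition enumeration : K -> K :=
  Fix swo_wf (fun _ => K)
    (fun x rec => min_or lt delta (fun a => X a /\ forall y (p : lt y x), lt (rec y p) a)).

Lemma enumeration_eq x :
  enumeration x = min_or lt delta (fun a => X a /\ forall y, lt y x -> lt (enumeration y) a).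
Proof.
  unfold enumeration at 1. rewrite Fix_eq; [reflexivity |].
  intros x0 f g Hfg. replace g with f; [reflexivity |].
  apply functional_extensionality_dep. intros y.
  apply functional_extensionality_dep. intros p. apply Hfg.
Qed.

Lemma enumeration_above x :
  X (enumeration x) -> exists a, X a /\ forall y, lt y x -> lt (enumeration y) a.
Proof.
  intros Hx. apply NNPP. intros Hn. rewrite enumeration_eq, min_or_empty in Hx by exact Hn.
  exact (swo_irrefl (X_bounded Hx)).
Qed.

Lemma enumeration_incr x y : X (enumeration x) -> lt y x -> lt (enumeration y) (enumeration x).
Proof.
  intros Hx Hyx. rewrite (enumeration_eq x).
  destruct (min_or_least delta (enumeration_above Hx)) as [[_ Habove] _]. exact (Habove y Hyx).
Qed.

(* Otherwise [enumeration] would inject [K] into the segment below [delta]. *)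
Lemma enumeration_stops : exists x, ~ X (enumeration x).
Proof.
  apply NNPP. intros Hn.
  assert (Hall : forall x, X (enumeration x)) by (intros x; apply NNPP; eauto).
  apply (@K_cardinal delta).
  exists (fun x => exist _ (enumeration x) (X_bounded (Hall x))).
  intros x y Hxy. injection Hxy as Hxy.
  destruct (swo_trichotomy x y) as [H | [H | H]]; [exfalso | exact H | exfalso].
  - pose proof (enumeration_incr (Hall y) H) as Hlt. rewrite Hxy in Hlt. exact (swo_irrefl Hlt).
  - pose proof (enumeration_incr (Hall x) H) as Hlt. rewrite Hxy in Hlt. exact (swo_irrefl Hlt).
Qed.

Lemma enumeration_exists : exists g f, enumerates X g f.
Proof.
  destruct (swo_least enumeration_stops) as [g [Hg Hgleast]].
  assert (Hbelow : forall y, lt y g -> X (enumeration y))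
    by (intros y Hy; apply NNPP; intros Hn; exact (Hgleast y Hn Hy)).
  exists g, enumeration. split; [exact Hbelow | split].
  - intros xi eta Hxi Heta H. apply enumeration_incr; auto.
  - intros a Ha.
    assert (Hex : exists y, lt y g /\ ~ lt (enumeration y) a).
    { apply NNPP. intros Hn. apply Hg.
      assert (Hbound : exists b, X b /\ forall z, lt z g -> lt (enumeration z) b).
      { exists a. split; [exact Ha |]. intros z Hz. apply NNPP. eauto. }
      rewrite enumeration_eq. exact (proj1 (proj1 (min_or_least delta Hbound))). }
    destruct (swo_least Hex) as [y [[Hy Hny] Hyleast]].
    exists y. split; [exact Hy |].
    assert (Hle : ~ lt a (enumeration y)).
    { rewrite enumeration_eq. apply (min_or_least delta).
      - exists (enumeration y). split; [exact (Hbelow y Hy) |].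
        intros z Hz. apply enumeration_incr; auto.
      - split; [exact Ha |]. intros z Hz. apply NNPP. intros Hn.
        apply (Hyleast z); auto. split; eauto using swo_trans. }
    destruct (swo_trichotomy (enumeration y) a) as [H | [H | H]]; tauto.
Qed.

End Enumeration.

Lemma otp_enumerates d X delta :
  (forall x, X x -> lt x delta) -> exists f, enumerates X (otp lt d X) f.
Proof.
  intros Hb. destruct (enumeration_exists Hb) as [g [f Hf]].
  exact (epsilon_spec (inhabits d) (fun g => exists f, enumerates X g f)
           (ex_intro _ g (ex_intro _ f Hf))).
Qed.

Lemma otp_ext d d' X Y delta :
  (forall x, X x -> lt x delta) -> (forall x, X x <-> Y x) -> otp lt d X = otp lt d' Y.
Proof.
  intros Hb HXY.
  assert (HbY : forall y, Y y -> lt y delta) by (intros y Hy; apply Hb, HXY, Hy).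
  destruct (otp_enumerates d Hb) as [f Hf], (otp_enumerates d' HbY) as [f' Hf'].
  exact (enumerates_length_unique (enumerates_ext HXY Hf) Hf').
Qed.

Lemma enumerates_restrict X g f eta0 :
  enumerates X g f -> lt eta0 g -> enumerates (fun x => X x /\ lt x (f eta0)) eta0 f.
Proof.
  intros Hf Heta0. pose proof Hf as [Hmaps [Hincr Honto]]. split; [| split].
  - intros z Hz. split; [apply Hmaps | apply Hincr]; eauto using swo_trans.
  - intros a b Ha Hb. apply Hincr; eauto using swo_trans.
  - intros x [Hx Hlt]. destruct (Honto x Hx) as [th [Hth <-]].
    exists th. split; [apply (enumerates_lt_iff Hf Heta0 Hth) |]; auto.
Qed.

Lemma enumerates_glue X Y g f eta0 f0 :
  enumerates X g f -> lt eta0 g ->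
  (forall x, ~ lt x (f eta0) -> (X x <-> Y x)) ->
  enumerates (fun x => Y x /\ lt x (f eta0)) eta0 f0 ->
  enumerates Y g (fun z => if excluded_middle_informative (lt z eta0) then f0 z else f z).
Proof.
  intros Hf Heta0 Htail [Hmaps0 [Hincr0 Honto0]].
  pose proof Hf as [Hmaps [Hincr Honto]].
  assert (Hupper : forall z, lt z g -> ~ lt z eta0 -> ~ lt (f z) (f eta0))
    by (intros z Hz Hn H; apply Hn, (enumerates_lt_iff Hf Heta0 Hz), H).
  split; [| split].
  - intros z Hz. destruct (excluded_middle_informative (lt z eta0)) as [H | H].
    + apply Hmaps0, H.
    + apply Htail; [apply Hupper | apply Hmaps]; auto.
  - intros a b Ha Hb Hab.
    destruct (excluded_middle_informative (lt a eta0)) as [H1 | H1];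
    destruct (excluded_middle_informative (lt b eta0)) as [H2 | H2].
    + auto.
    + apply (swo_lt_le_trans (proj2 (Hmaps0 a H1))). apply swo_not_lt, Hupper; auto.
    + exfalso. eauto using swo_trans.
    + auto.
  - intros y Hy. destruct (classic (lt y (f eta0))) as [H | H].
    + destruct (Honto0 y (conj Hy H)) as [th [Hth <-]].
      exists th. split; [eauto using swo_trans |].
      destruct (excluded_middle_informative (lt th eta0)); tauto.
    + destruct (Honto y (proj2 (Htail y H) Hy)) as [th [Hth <-]].
      exists th. split; [exact Hth |].
      destruct (excluded_middle_informative (lt th eta0)) as [Hlt | _]; [| reflexivity].
      exfalso. apply H, (enumerates_lt_iff Hf Heta0 Hth), Hlt.
Qed.

Lemma otp_eq_of_tail d1 d2 d3 d4 X Y delta xi0 :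
  (forall x, X x -> lt x delta) -> (forall y, Y y -> lt y delta) -> X xi0 ->
  (forall x, ~ lt x xi0 -> (X x <-> Y x)) ->
  otp lt d1 (fun x => X x /\ lt x xi0) = otp lt d2 (fun y => Y y /\ lt y xi0) ->
  otp lt d3 X = otp lt d4 Y.
Proof.
  intros HbX HbY Hxi0 Htail Hbelow.
  destruct (otp_enumerates d3 HbX) as [f Hf].
  destruct (proj2 (proj2 Hf) xi0 Hxi0) as [eta0 [Heta0 <-]].
  assert (HX0 : otp lt d1 (fun x => X x /\ lt x (f eta0)) = eta0).
  { destruct (otp_enumerates d1 (X := fun x => X x /\ lt x (f eta0)) (fun x H => proj2 H))
      as [f1 Hf1].
    exact (enumerates_length_unique Hf1 (enumerates_restrict Hf Heta0)). }
  destruct (otp_enumerates d2 (X := fun y => Y y /\ lt y (f eta0)) (fun y H => proj2 H))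
    as [f0 Hf0].
  rewrite <- Hbelow, HX0 in Hf0.
  destruct (otp_enumerates d4 HbY) as [f' Hf'].
  exact (enumerates_length_unique (enumerates_glue Hf Heta0 Htail Hf0) Hf').
Qed.

(** * Walks *)

Variable C : K -> K -> Prop.
Hypothesis HC : C_sequence lt C.

Lemma C_below t x : C t x -> lt x t.
Proof. exact (proj1 (proj1 (HC t)) x). Qed.

Definition eventually_below (delta : K) (P : K -> Prop) : Prop :=
  exists e, lt e delta /\ forall xi, lt e xi -> lt xi delta -> P xi.

Definition cofinal_below (delta : K) (A : K -> Prop) : Prop :=
  forall e, lt e delta -> exists xi, lt e xi /\ lt xi delta /\ A xi.

Lemma eventually_below_mono delta (P Q : K -> Prop) :
  (forall xi, lt xi delta -> P xi -> Q xi) -> eventually_below delta P -> eventually_below delta Q.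
Proof. intros HPQ [e [He HP]]. exists e. split; auto. Qed.

Lemma eventually_below_and delta (P Q : K -> Prop) :
  eventually_below delta P -> eventually_below delta Q ->
  eventually_below delta (fun xi => P xi /\ Q xi).
Proof.
  intros [e [He HP]] [e' [He' HQ]].
  destruct (swo_trichotomy e e') as [H | [<- | H]].
  - exists e'. split; [exact He' |]. intros xi H1 H2. split; eauto using swo_trans.
  - exists e. split; auto.
  - exists e. split; [exact He |]. intros xi H1 H2. split; eauto using swo_trans.
Qed.

Lemma eventually_below_forall_lt delta (P : nat -> K -> Prop) n :
  (exists e, lt e delta) -> (forall i, i < n -> eventually_below delta (P i)) ->
  eventually_below delta (fun xi => forall i, i < n -> P i xi).
Proof.
  intros [e He]. induction n as [| n IH]; intros HP.
  - exists e. split; [exact He |]. intros xi _ _ i Hi. lia.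
  - apply (eventually_below_mono (P := fun xi => (forall i, i < n -> P i xi) /\ P n xi)).
    + intros xi _ [Hlt Hn] i Hi. destruct (Nat.eq_dec i n) as [-> | Hne]; auto with arith.
      apply Hlt. lia.
    + apply eventually_below_and; auto.
Qed.

Lemma eventually_below_cofinal delta (P A : K -> Prop) :
  eventually_below delta P -> cofinal_below delta A -> exists xi, lt xi delta /\ P xi /\ A xi.
Proof.
  intros [e [He HP]] HA. destruct (HA e He) as [xi [H1 [H2 H3]]]. exists xi. auto.
Qed.

Lemma not_cofinal_eventually delta (A : K -> Prop) :
  ~ cofinal_below delta A -> eventually_below delta (fun xi => ~ A xi).
Proof.
  intros Hn. apply NNPP. intros Hev. apply Hn. intros e He.
  apply NNPP. intros Hnone. apply Hev. exists e. split; [exact He |].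
  intros xi H1 H2 HA. apply Hnone. eauto.
Qed.

Lemma cofinal_C_mem delta t :
  (exists e, lt e delta) -> lt delta t -> cofinal_below delta (C t) -> C t delta.
Proof.
  intros [e He] Ht Hcof. apply (proj2 (proj1 (HC t))); [exact Ht | |].
  - destruct (Hcof e He) as [x [_ [Hx HCx]]]. eauto.
  - intros xi Hxi. destruct (Hcof xi Hxi) as [x [H1 [H2 H3]]]. eauto.
Qed.

Lemma C_cofinal_self delta : nonzero_limit lt delta -> cofinal_below delta (C delta).
Proof.
  intros [_ Hlim] e He. apply NNPP. intros Hn.
  assert (Hub : forall x, C delta x -> le lt x e).
  { intros x Hx. apply swo_not_lt. intros Hex. apply Hn. exists x. split; auto using C_below. }
  destruct (Hlim e He) as [eta [H1 H2]].
  exact (swo_le_not_lt (proj1 (proj2 (HC delta) e) Hub eta H2) H1).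
Qed.

(* If [C_t] lay below [delta], it would either be cofinal in [delta], and closedness puts
   [delta] in [C_t], or bounded below [delta], contradicting [sup C_t = sup t > delta]. *)
Lemma C_meets_above delta t :
  nonzero_limit lt delta -> lt delta t -> exists x, C t x /\ le lt delta x.
Proof.
  intros Hlim Ht. apply NNPP. intros Hn.
  assert (Hbelow : forall x, C t x -> lt x delta)
    by (intros x Hx; apply NNPP; intros H; apply Hn; exists x; split; [exact Hx |];
        apply swo_not_lt; exact H).
  destruct (classic (cofinal_below delta (C t))) as [Hcof | Hncof].
  - exact (swo_irrefl (Hbelow _ (cofinal_C_mem (proj1 Hlim) Ht Hcof))).
  - destruct (not_cofinal_eventually Hncof) as [e [He Hout]].
    assert (Hub : forall x, C t x -> le lt x e)
      by (intros x Hx; apply swo_not_lt; intros H; exact (Hout x H (Hbelow x Hx) Hx)).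
    exact (swo_le_not_lt (proj1 (proj2 (HC t) e) Hub delta Ht) He).
Qed.

Definition C_otp (t xi : K) : K := otp lt xi (fun x => C t x /\ lt x xi).

Definition C_avoids (t xi delta : K) : Prop := forall x, le lt xi x -> lt x delta -> ~ C t x.

Lemma eventually_C_avoids t delta :
  eventually_below delta (fun xi => ~ C t xi) ->
  eventually_below delta (fun xi => C_avoids t xi delta).
Proof.
  intros [e [He Hout]]. exists e. split; [exact He |].
  intros xi H1 H2 x Hx Hxd. apply Hout; eauto using swo_lt_le_trans.
Qed.

Lemma C_otp_avoids t xi delta : lt xi delta -> C_avoids t xi delta -> C_otp t xi = C_otp t delta.
Proof.
  intros Hxi Havoid. apply (otp_ext _ _ (delta := xi)); [intros x [_ H]; exact H |].
  intros x. split; intros [Hx Hlt]; split; eauto using swo_trans.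
  apply NNPP. intros Hn. exact (Havoid x (swo_not_lt Hn) Hlt Hx).
Qed.

Lemma C_otp_eq_of_tail t t' xi0 delta :
  lt xi0 delta -> C t xi0 -> (forall x, le lt xi0 x -> lt x delta -> (C t x <-> C t' x)) ->
  C_otp t xi0 = C_otp t' xi0 -> C_otp t delta = C_otp t' delta.
Proof.
  intros Hxi0 Ht0 Htail Hbelow.
  assert (Hrestrict : forall u, C_otp u xi0 =
            otp lt xi0 (fun x => (C u x /\ lt x delta) /\ lt x xi0)).
  { intros u. apply (otp_ext _ _ (delta := xi0)); [intros x [_ H]; exact H |].
    intros x. split; [intros [H1 H2] | intros [[H1 _] H2]]; eauto using swo_trans. }
  unfold C_otp. apply otp_eq_of_tail with (d1 := xi0) (d2 := xi0) (delta := delta) (xi0 := xi0);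
    try (intros x [_ H]; exact H).
  - split; auto.
  - intros x Hx. split; intros [H1 H2]; split; auto; apply Htail; auto using swo_not_lt.
  - rewrite <- !Hrestrict. exact Hbelow.
Qed.

Lemma rho0_C_otp b g :
  rho0 lt C b g = map (fun n => C_otp (Tr lt C b g n) b) (seq 0 (rho2 lt C b g)).
Proof. reflexivity. Qed.

Definition walk_step (b t : K) : K := min_or lt b (fun x => C t x /\ le lt b x).

Lemma Tr_S_gt b g n :
  lt b (Tr lt C b g n) -> Tr lt C b g (S n) = walk_step b (Tr lt C b g n).
Proof.
  intros H. simpl. destruct (excluded_middle_informative _); [reflexivity | contradiction].
Qed.

Lemma Tr_S_not_gt b g n : ~ lt b (Tr lt C b g n) -> Tr lt C b g (S n) = b.
Proof.
  intros H. simpl. destruct (excluded_middle_informative _); [contradiction | reflexivity].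
Qed.

Lemma walk_step_mem b t : (exists x, C t x /\ le lt b x) -> C t (walk_step b t).
Proof. intros Hex. exact (proj1 (proj1 (min_or_least b Hex))). Qed.

Lemma walk_step_ge b t : le lt b (walk_step b t).
Proof.
  destruct (classic (exists x, C t x /\ le lt b x)) as [Hex | Hn].
  - exact (proj2 (proj1 (min_or_least b Hex))).
  - right. symmetry. exact (min_or_empty b Hn).
Qed.

Lemma walk_step_lt b t : lt b t -> lt (walk_step b t) t.
Proof.
  intros Hbt. destruct (classic (exists x, C t x /\ le lt b x)) as [Hex | Hn].
  - exact (C_below (walk_step_mem Hex)).
  - unfold walk_step. rewrite min_or_empty by exact Hn. exact Hbt.
Qed.

Lemma walk_step_self b t : C t b -> walk_step b t = b.
Proof.
  intros Hb. apply min_or_eq; [split; [exact Hb | right; reflexivity] |].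
  intros x [_ Hx]. exact (swo_le_not_lt Hx).
Qed.

Lemma walk_step_avoids xi delta t :
  lt xi delta -> C t delta -> C_avoids t xi delta -> walk_step xi t = delta.
Proof.
  intros Hxi Hdelta Havoid. apply min_or_eq; [split; [exact Hdelta | left; exact Hxi] |].
  intros x [Hx Hle] Hlt. exact (Havoid x Hle Hlt Hx).
Qed.

Lemma walk_step_skip xi delta t :
  lt xi delta -> C_avoids t xi delta -> lt delta (walk_step delta t) ->
  walk_step xi t = walk_step delta t.
Proof.
  intros Hxi Havoid Hover.
  assert (Hex : exists x, C t x /\ le lt delta x).
  { apply NNPP. intros Hn. unfold walk_step in Hover. rewrite min_or_empty in Hover by exact Hn.
    exact (swo_irrefl Hover). }
  destruct (min_or_least delta Hex) as [[Hmem _] Hleast].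
  apply min_or_eq; [split; [exact Hmem | left; eauto using swo_trans] |].
  intros x [Hx Hle] Hlt. destruct (classic (lt x delta)) as [H | H].
  - exact (Havoid x Hle H Hx).
  - exact (Hleast x (conj Hx (swo_not_lt H)) Hlt).
Qed.

Lemma Tr_S_ge b g n : le lt b (Tr lt C b g (S n)).
Proof.
  destruct (classic (lt b (Tr lt C b g n))) as [H | H].
  - rewrite Tr_S_gt by exact H. apply walk_step_ge.
  - rewrite Tr_S_not_gt by exact H. right. reflexivity.
Qed.

Lemma Tr_shift b g m n : Tr lt C b g (m + n) = Tr lt C b (Tr lt C b g m) n.
Proof.
  induction n as [| n IH]; [rewrite Nat.add_0_r; reflexivity |].
  rewrite Nat.add_succ_r. simpl. rewrite IH. reflexivity.
Qed.

Lemma Tr_reaches b g : exists n, Tr lt C b g n = b.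
Proof.
  induction g as [g IH] using (well_founded_ind swo_wf).
  destruct (classic (lt b g)) as [H | H].
  - destruct (IH (walk_step b g) (walk_step_lt H)) as [n Hn].
    exists (1 + n). rewrite Tr_shift, (Tr_S_gt (n := 0)) by exact H. exact Hn.
  - exists 1. apply Tr_S_not_gt. exact H.
Qed.

Lemma rho2_spec b g :
  Tr lt C b g (rho2 lt C b g) = b /\ forall m, m < rho2 lt C b g -> Tr lt C b g m <> b.
Proof.
  unfold rho2. apply epsilon_spec.
  destruct (Tr_reaches b g) as [n Hn].
  induction n as [n IH] using (well_founded_ind Nat.lt_wf_0).
  destruct (classic (exists m, m < n /\ Tr lt C b g m = b)) as [[m [Hm1 Hm2]] | Hno].
  - exact (IH m Hm1 Hm2).
  - exists n. split; [exact Hn |]. intros m Hm He. eauto.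
Qed.

Lemma rho2_eq b g n :
  Tr lt C b g n = b -> (forall m, m < n -> Tr lt C b g m <> b) -> rho2 lt C b g = n.
Proof.
  intros Hn Hbefore. destruct (rho2_spec b g) as [Hr Hrbefore].
  destruct (Nat.lt_trichotomy (rho2 lt C b g) n) as [H | [H | H]]; auto.
  - exfalso. exact (Hbefore _ H Hr).
  - exfalso. exact (Hrbefore _ H Hn).
Qed.

Lemma rho2_gt b g n : (forall m, m <= n -> Tr lt C b g m <> b) -> n < rho2 lt C b g.
Proof.
  intros Hbefore. destruct (rho2_spec b g) as [Hr _].
  apply Nat.nle_gt. intros H. exact (Hbefore _ H Hr).
Qed.

Lemma rho0_length b g : length (rho0 lt C b g) = rho2 lt C b g.
Proof. rewrite rho0_C_otp, length_map, length_seq. reflexivity. Qed.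

Lemma rho0_self b : rho0 lt C b b = [].
Proof.
  rewrite rho0_C_otp, (rho2_eq (n := 0)); [reflexivity | reflexivity |]. intros m Hm. lia.
Qed.

Lemma rho2_pos b g : b <> g -> 1 <= rho2 lt C b g.
Proof. intros H. apply (rho2_gt (n := 0)). intros m Hm. replace m with 0 by lia. simpl. auto. Qed.

Lemma Tr_above b g i : lt b g -> i < rho2 lt C b g -> lt b (Tr lt C b g i).
Proof.
  intros Hg Hi. destruct i as [| i]; [exact Hg |].
  destruct (Tr_S_ge b g i) as [H | H]; [exact H |].
  exfalso. exact (proj2 (rho2_spec b g) _ Hi (eq_sym H)).
Qed.

Lemma map_seq_add (A : Type) (f : nat -> A) n r :
  map f (seq n r) = map (fun j => f (n + j)) (seq 0 r).
Proof.
  revert f n. induction r as [| r IH]; intros f n; [reflexivity |].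
  simpl. rewrite Nat.add_0_r, IH, (IH _ 1). f_equal.
  apply map_ext. intros j. f_equal. lia.
Qed.

Lemma rho0_split b g n :
  (forall m, m < n -> Tr lt C b g m <> b) ->
  rho0 lt C b g = map (fun i => C_otp (Tr lt C b g i) b) (seq 0 n) ++ rho0 lt C b (Tr lt C b g n).
Proof.
  intros Hbefore.
  destruct (rho2_spec b (Tr lt C b g n)) as [Hr Hrbefore].
  assert (Hlen : rho2 lt C b g = n + rho2 lt C b (Tr lt C b g n)).
  { apply rho2_eq; [rewrite Tr_shift; exact Hr |].
    intros m Hm. destruct (Nat.lt_ge_cases m n) as [H | H]; [auto |].
    replace m with (n + (m - n)) by lia. rewrite Tr_shift. apply Hrbefore. lia. }
  rewrite !rho0_C_otp, Hlen, seq_app, map_app, Nat.add_0_l, (map_seq_add _ n). f_equal.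
  apply map_ext. intros j. rewrite Tr_shift. reflexivity.
Qed.

Lemma rho0_one delta xi : lt xi delta -> C delta xi -> rho0 lt C xi delta = [C_otp delta xi].
Proof.
  intros Hxi Hmem. rewrite (rho0_split (n := 1)).
  - rewrite Tr_S_gt by exact Hxi. simpl. rewrite walk_step_self, rho0_self by exact Hmem.
    reflexivity.
  - intros m Hm. replace m with 0 by lia. simpl. intros ->. exact (swo_irrefl Hxi).
Qed.

Lemma rho2_one_iff delta xi :
  nonzero_limit lt delta -> lt xi delta -> (C delta xi <-> rho2 lt C xi delta = 1).
Proof.
  intros Hlim Hxi. split; intros H.
  - rewrite <- rho0_length, rho0_one by assumption. reflexivity.
  - destruct (rho2_spec xi delta) as [Hr _]. rewrite H, Tr_S_gt in Hr by exact Hxi.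
    rewrite <- Hr. apply walk_step_mem.
    destruct (C_cofinal_self Hlim Hxi) as [x [H1 [_ H3]]].
    exists x. split; [exact H3 | left; exact H1].
Qed.

(** * Walks to points just below a limit *)

Definition passes_through (delta g : K) : Prop :=
  eventually_below delta (fun xi => rho0 lt C xi g = rho0 lt C delta g ++ rho0 lt C xi delta).

(* The walk from [g] to [delta] ends with a step from [a], where [C_a] is cofinal in
   [delta]; [p] lists the entries of [rho0 delta g] for the earlier steps. *)
Definition branches_at (delta g a : K) (p : list K) : Prop :=
  lt delta a /\ cofinal_below delta (C a) /\ rho0 lt C delta g = p ++ [C_otp a delta] /\
  eventually_below delta (fun xi =>
    (C a xi -> rho0 lt C xi g = p ++ [C_otp a xi]) /\
    (~ C a xi -> S (length p) < length (rho0 lt C xi g))).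

Section WalkTail.
Variables (delta g : K) (k : nat).
Hypotheses (delta_limit : nonzero_limit lt delta) (delta_lt_g : lt delta g)
  (rho2_delta_g : rho2 lt C delta g = S k).

Lemma Tr_above_delta i : i <= k -> lt delta (Tr lt C delta g i).
Proof. intros Hi. apply Tr_above; [exact delta_lt_g | lia]. Qed.

Lemma C_last_step : C (Tr lt C delta g k) delta.
Proof.
  destruct (rho2_spec delta g) as [Hr _]. rewrite rho2_delta_g in Hr.
  rewrite Tr_S_gt in Hr by (apply Tr_above_delta; lia).
  rewrite <- Hr at 2. apply walk_step_mem, C_meets_above, Tr_above_delta; auto.
Qed.

(* An earlier step with [C_t] cofinal in [delta] would already have landed on [delta]. *)
Lemma early_steps_avoid :
  eventually_below delta (fun xi => forall i, i < k -> C_avoids (Tr lt C delta g i) xi delta).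
Proof.
  apply (eventually_below_forall_lt (P := fun i xi => C_avoids (Tr lt C delta g i) xi delta));
    [exact (proj1 delta_limit) |]. intros i Hi.
  apply eventually_C_avoids, not_cofinal_eventually. intros Hcof.
  assert (Hmem : C (Tr lt C delta g i) delta)
    by (apply cofinal_C_mem; [exact (proj1 delta_limit) | apply Tr_above_delta; lia | exact Hcof]).
  apply (proj2 (rho2_spec delta g) (S i)); [lia |].
  rewrite Tr_S_gt by (apply Tr_above_delta; lia). apply walk_step_self, Hmem.
Qed.

Lemma Tr_prefix xi :
  lt xi delta -> (forall i, i < k -> C_avoids (Tr lt C delta g i) xi delta) ->
  forall i, i <= k -> Tr lt C xi g i = Tr lt C delta g i.
Proof.
  intros Hxi Havoid i. induction i as [| i IH]; intros Hi; [reflexivity |].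
  assert (Hstep : lt delta (Tr lt C delta g i)) by (apply Tr_above_delta; lia).
  assert (Hxi_step : lt xi (Tr lt C xi g i)) by (rewrite IH by lia; exact (swo_trans Hxi Hstep)).
  rewrite (Tr_S_gt Hxi_step), (Tr_S_gt Hstep), IH by lia.
  apply walk_step_skip; [exact Hxi | apply Havoid; lia |].
  rewrite <- Tr_S_gt by exact Hstep. apply Tr_above_delta, Hi.
Qed.

Definition early_entries : list K := map (fun i => C_otp (Tr lt C delta g i) delta) (seq 0 k).

Lemma rho0_delta_g : rho0 lt C delta g = early_entries ++ [C_otp (Tr lt C delta g k) delta].
Proof. rewrite rho0_C_otp, rho2_delta_g, seq_S, map_app. reflexivity. Qed.

Lemma rho0_near_delta xi :
  lt xi delta -> (forall i, i < k -> C_avoids (Tr lt C delta g i) xi delta) ->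
  rho0 lt C xi g = early_entries ++ C_otp (Tr lt C delta g k) xi ::
                   rho0 lt C xi (walk_step xi (Tr lt C delta g k)).
Proof.
  intros Hxi Havoid.
  assert (Hprefix := Tr_prefix Hxi Havoid).
  assert (Habove : forall i, i <= k -> lt xi (Tr lt C xi g i))
    by (intros i Hi; rewrite Hprefix by exact Hi; eauto using swo_trans, Tr_above_delta).
  rewrite (rho0_split (n := S k)).
  - rewrite Tr_S_gt, Hprefix by auto. rewrite seq_S, map_app, <- app_assoc.
    cbn [map Nat.add app]. rewrite Hprefix by auto. f_equal.
    apply map_ext_in. intros i Hi. apply in_seq in Hi.
    rewrite Hprefix by lia. apply C_otp_avoids; [exact Hxi | apply Havoid; lia].
  - intros m Hm Heq. apply (swo_irrefl (x := xi)). rewrite <- Heq at 2. apply Habove. lia.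
Qed.

Lemma walk_passes_through :
  eventually_below delta (fun xi => ~ C (Tr lt C delta g k) xi) -> passes_through delta g.
Proof.
  intros Hlast. apply eventually_C_avoids in Hlast.
  generalize (eventually_below_and early_steps_avoid Hlast). apply eventually_below_mono.
  intros xi Hxi [Havoid Hlast_avoid].
  rewrite (rho0_near_delta Hxi Havoid), (walk_step_avoids Hxi C_last_step Hlast_avoid),
    (C_otp_avoids Hxi Hlast_avoid), rho0_delta_g, <- app_assoc.
  reflexivity.
Qed.

Lemma walk_branches :
  cofinal_below delta (C (Tr lt C delta g k)) ->
  branches_at delta g (Tr lt C delta g k) early_entries.
Proof.
  intros Hcof. split; [apply Tr_above_delta; lia | split; [exact Hcof | split]].
  { exact rho0_delta_g. }
  generalize early_steps_avoid. apply eventually_below_mono. intros xi Hxi Havoid.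
  rewrite (rho0_near_delta Hxi Havoid). split.
  - intros Hmem. rewrite walk_step_self, rho0_self by exact Hmem. reflexivity.
  - intros Hnot.
    assert (Hstep : C (Tr lt C delta g k) (walk_step xi (Tr lt C delta g k)))
      by (apply walk_step_mem; exists delta; split; [exact C_last_step | left; exact Hxi]).
    assert (Hpos : 1 <= rho2 lt C xi (walk_step xi (Tr lt C delta g k)))
      by (apply rho2_pos; intros Heq; rewrite <- Heq in Hstep; contradiction).
    rewrite length_app. simpl. rewrite rho0_length. lia.
Qed.

End WalkTail.

Lemma walk_shape delta g :
  nonzero_limit lt delta -> lt delta g ->
  passes_through delta g \/ exists a p, branches_at delta g a p.
Proof.
  intros Hlim Hg. destruct (rho2 lt C delta g) as [| k] eqn:Hk.
  { exfalso. assert (Hpos : 1 <= rho2 lt C delta g); [| lia].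
    apply rho2_pos. intros ->. exact (swo_irrefl Hg). }
  destruct (classic (cofinal_below delta (C (Tr lt C delta g k)))) as [Hcof | Hncof].
  - right. eauto using walk_branches.
  - left. apply walk_passes_through with k; auto using not_cofinal_eventually.
Qed.

Lemma passes_through_level delta g :
  nonzero_limit lt delta -> passes_through delta g ->
  eventually_below delta (fun xi =>
    (C delta xi <-> length (rho0 lt C xi g) = S (length (rho0 lt C delta g))) /\
    S (length (rho0 lt C delta g)) <= length (rho0 lt C xi g)).
Proof.
  intros Hlim. apply eventually_below_mono. intros xi Hxi Heq.
  assert (Hpos : 1 <= rho2 lt C xi delta)
    by (apply rho2_pos; intros ->; exact (swo_irrefl Hxi)).
  rewrite Heq, length_app, (rho0_length xi delta), (rho2_one_iff Hlim Hxi). lia.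
Qed.

Lemma branches_at_level delta g a p :
  branches_at delta g a p ->
  eventually_below delta (fun xi =>
    (C a xi <-> length (rho0 lt C xi g) = S (length p)) /\ S (length p) <= length (rho0 lt C xi g)).
Proof.
  intros [_ [_ [_ Htail]]]. revert Htail. apply eventually_below_mono.
  intros xi _ [Hin Hout]. destruct (classic (C a xi)) as [H | H].
  - rewrite (Hin H), length_app. simpl. split; [split; [intros _; lia | intros _; exact H] | lia].
  - specialize (Hout H). split; [split; [contradiction | lia] | lia].
Qed.

Lemma eventually_min_levels_agree delta (A B : K -> Prop) (l l' : K -> nat) m m' :
  cofinal_below delta A -> cofinal_below delta B ->
  eventually_below delta (fun xi => l xi = l' xi) ->
  eventually_below delta (fun xi => (A xi <-> l xi = m) /\ m <= l xi) ->
  eventually_below delta (fun xi => (B xi <-> l' xi = m') /\ m' <= l' xi) ->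
  eventually_below delta (fun xi => A xi <-> B xi).
Proof.
  intros HA HB Hl HlA HlB.
  pose proof (eventually_below_and Hl (eventually_below_and HlA HlB)) as Hall.
  destruct (eventually_below_cofinal Hall HA) as [x [_ [[Hx [[HAx _] [_ Hmx]]] Ax]]].
  destruct (eventually_below_cofinal Hall HB) as [y [_ [[Hy [[_ Hmy] [HBy _]]] By]]].
  apply HAx in Ax. apply HBy in By.
  assert (m = m') as <- by lia.
  revert Hall. apply eventually_below_mono. intros xi _ [Hxi [[HAxi _] [HBxi _]]].
  rewrite HAxi, HBxi, Hxi. tauto.
Qed.

Lemma in_V_tail_differs delta a :
  in_V lt C delta -> lt delta a -> ~ eventually_below delta (fun xi => C a xi <-> C delta xi).
Proof.
  intros [[_ Hlim] HV] Ha [e [He Hagree]].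
  destruct (Hlim e He) as [eta [H1 H2]].
  apply (HV a Ha eta H2). intros xi Hle Hxi. symmetry. apply Hagree; eauto using swo_lt_le_trans.
Qed.

Lemma passes_through_unique delta g1 g2 :
  nonzero_limit lt delta -> passes_through delta g1 -> passes_through delta g2 ->
  eventually_below delta (fun xi => rho0 lt C xi g1 = rho0 lt C xi g2) ->
  rho0 lt C delta g1 = rho0 lt C delta g2.
Proof.
  intros Hlim T1 T2 Heq.
  destruct (eventually_below_cofinal (eventually_below_and Heq (eventually_below_and T1 T2))
              (C_cofinal_self Hlim)) as [xi [_ [[E [E1 E2]] _]]].
  rewrite E1, E2 in E. exact (app_inv_tail _ _ _ E).
Qed.

Lemma eventually_same_length delta g1 g2 :
  eventually_below delta (fun xi => rho0 lt C xi g1 = rho0 lt C xi g2) ->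
  eventually_below delta (fun xi => length (rho0 lt C xi g1) = length (rho0 lt C xi g2)).
Proof. apply eventually_below_mono. intros xi _ ->. reflexivity. Qed.

(* This is the only case that needs [delta] in [V]. *)
Lemma branches_at_not_passes_through delta g1 g2 a p :
  in_V lt C delta -> branches_at delta g1 a p -> passes_through delta g2 ->
  eventually_below delta (fun xi => rho0 lt C xi g1 = rho0 lt C xi g2) -> False.
Proof.
  intros HV Hb T Heq. pose proof (proj1 HV) as Hlim.
  apply (in_V_tail_differs HV (proj1 Hb)).
  apply (eventually_min_levels_agree (proj1 (proj2 Hb)) (C_cofinal_self Hlim)
           (eventually_same_length Heq) (branches_at_level Hb) (passes_through_level Hlim T)).
Qed.

Lemma branches_at_unique delta g1 g2 a a' p p' :
  branches_at delta g1 a p -> branches_at delta g2 a' p' ->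
  eventually_below delta (fun xi => rho0 lt C xi g1 = rho0 lt C xi g2) ->
  rho0 lt C delta g1 = rho0 lt C delta g2.
Proof.
  intros Hb1 Hb2 Heq.
  pose proof (eventually_min_levels_agree (proj1 (proj2 Hb1)) (proj1 (proj2 Hb2))
                (eventually_same_length Heq) (branches_at_level Hb1) (branches_at_level Hb2))
    as Hagree.
  destruct Hb1 as [_ [Hcof [Hd1 Ht1]]], Hb2 as [_ [_ [Hd2 Ht2]]].
  destruct (eventually_below_and (eventually_below_and Hagree Heq) (eventually_below_and Ht1 Ht2))
    as [e [He Hall]].
  destruct (Hcof e He) as [x0 [Hex0 [Hx0 Ha0]]].
  destruct (Hall x0 Hex0 Hx0) as [[Hiff E] [[Hin1 _] [Hin2 _]]].
  rewrite (Hin1 Ha0), (Hin2 (proj1 Hiff Ha0)) in E.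
  destruct (app_inj_tail _ _ _ _ E) as [<- Hotp].
  rewrite Hd1, Hd2. do 2 f_equal.
  apply (C_otp_eq_of_tail Hx0 Ha0); [| exact Hotp].
  intros x Hle Hx. apply (Hall x (swo_lt_le_trans Hex0 Hle) Hx).
Qed.

Lemma walk_shapes_agree delta g1 g2 :
  in_V lt C delta -> lt delta g1 -> lt delta g2 ->
  eventually_below delta (fun xi => rho0 lt C xi g1 = rho0 lt C xi g2) ->
  rho0 lt C delta g1 = rho0 lt C delta g2.
Proof.
  intros HV Hg1 Hg2 Heq. pose proof (proj1 HV) as Hlim.
  assert (Heq' : eventually_below delta (fun xi => rho0 lt C xi g2 = rho0 lt C xi g1))
    by (revert Heq; apply eventually_below_mono; intros xi _ H; symmetry; exact H).
  destruct (walk_shape Hlim Hg1) as [T1 | [a [p B1]]], (walk_shape Hlim Hg2) as [T2 | [a' [p' B2]]].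
  - exact (passes_through_unique Hlim T1 T2 Heq).
  - destruct (branches_at_not_passes_through HV B2 T1 Heq').
  - destruct (branches_at_not_passes_through HV B1 T2 Heq).
  - exact (branches_at_unique B1 B2 Heq).
Qed.

End Walks.

Theorem lemma5p1 (K : Type) (lt : K -> K -> Prop)
  (Hkappa : regular_uncountable_cardinal lt)
  (C : K -> K -> Prop) (HC : C_sequence lt C)
  (alpha beta : K) (Hab : lt alpha beta)
  (Hinc1 : ~ fun_subset lt alpha (rho0_fiber lt C alpha) beta (rho0_fiber lt C beta))
  (Hinc2 : ~ fun_subset lt beta (rho0_fiber lt C beta) alpha (rho0_fiber lt C alpha)) :
  ~ in_V lt C (Delta lt alpha (rho0_fiber lt C alpha) beta (rho0_fiber lt C beta)).
Proof.
  (* [Hinc2] holds automatically since [alpha < beta]. *)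
  destruct Hkappa as [W [Hcard _]].
  destruct (Delta_spec W Hab Hinc1) as [Hda [Hne Hbelow]].
  intros HV. apply Hne.
  apply (walk_shapes_agree W Hcard HC HV Hda (swo_trans W Hda Hab)).
  destruct (proj1 (proj1 HV)) as [e He].
  exists e. split; [exact He |]. intros xi _ Hxi. apply Hbelow, Hxi.
Qed.
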